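(* Let $A$ be a commutative nilpotent $\mathbb{F}_p$-algebra of finite dimension $n$, and let $e\ge1$ be such that $A^e\ne 0$ and $A^{e+1}=0$. For $k\ge 0$ let $N_k=\{a\in A: x_1\cdots x_k a=0 \text{ for all } x_1,\dots,x_k\in A\}$ (so $N_0=0$ and $N_e=A$). For $x\in A$ let $q(x)=\dim_{\mathbb{F}_p}(\mathbb{F}_p x+Ax)$, and for $1\le t\le e$ let $q_t=\min_{x\in N_t\setminus N_{t-1}} q(x)$. Let $G$ be the map from $\mathbb{F}_p$-subspaces of $A$ to ideals of $A$ given by $G(V)=V+AV$. Then for each $t$ with $1\le t\le e$ and every ideal $J$ of $A$ with $J\subseteq N_t$ and $J\not\subseteq N_{t-1}$, \[ |G^{-1}(J)|\ge p^{\lfloor q_t^2/4\rfloor}. \] Consequently, \[ p^{\lfloor q_t^2/4\rfloor}\bigl(i(N_t)-i(N_{t-1})\bigr)\le s(N_t)-s(N_{t-1}), \] where for a subspace $J$ of $A$, $s(J)$ is the number of $\mathbb{F}_p$-subspaces of $J$ and, for an ideal $J$, $i(J)$ is the number of ideals of $A$ contained in $J$.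
   Context: Algebras are commutative, associative, not necessarily unital. $AV$ denotes the span of products $av$ with $a\in A$, $v\in V$. *)

From HB Require Import structures.
From mathcomp Require Import all_boot all_order all_algebra.
Import VectorInternalTheory.
Set Implicit Arguments. Unset Strict Implicit. Unset Printing Implicit Defensive.
Import GRing.Theory.
Local Open Scope ring_scope.

(* Subspaces of a finite vector space over a finite field form a finite type,
   so that subspaces can be counted with #|_|. *)
HB.instance Definition _ (F : finFieldType) (n : nat) :=
  [Countable of {vspace 'rV[F]_n} by <:].
HB.instance Definition _ (F : finFieldType) (n : nat) :=
  [Finite of {vspace 'rV[F]_n} by <:].

Section AlgDefs.
Variables (p n : nat).
Local Notation A := 'rV['F_p]_n.
Variable mul : A -> A -> A.

(* mul is F_p-linear in its first argument (with commutativity: bilinear). *)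
Definition mul_linear_l : Prop :=
  forall (k : 'F_p) (a b c : A), mul (k *: a + b) c = k *: mul a c + mul b c.

Definition mulAV (V : {vspace A}) : {vspace A} :=
  <<[seq mul a v | a <- enum [set: A], v <- enum [set w : A | w \in V]]>>%VS.

Definition Gmap (V : {vspace A}) : {vspace A} := (V + mulAV V)%VS.

Definition is_ideal (J : {vspace A}) : bool := (mulAV J <= J)%VS.

Definition Apow (k : nat) : {vspace A} :=
  <<[seq foldr mul a (tval xs) | a <- enum [set: A], xs <- enum [set: (k.-1).-tuple A]]>>%VS.

Definition Nset (k : nat) : {set A} :=
  [set a : A | [forall xs : k.-tuple A, foldr mul a (tval xs) == 0]].

Definition qdim (x : A) : nat :=
  \dim (<[x]> + <<[seq mul a x | a <- enum [set: A]]>>)%VS.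

(* q_t = min_{x in N_t \ N_{t-1}} q(x)  (the default n is never used when the
   range is nonempty, and q(x) <= n anyway) *)
Definition qmin (t : nat) : nat :=
  \big[minn/n]_(x in Nset t :\: Nset t.-1) qdim x.

Definition s_of (S : {set A}) : nat := #|[set U : {vspace A} | U \subset S]|.
Definition i_of (S : {set A}) : nat :=
  #|[set I : {vspace A} | is_ideal I && (I \subset S)]|.

End AlgDefs.

From HB Require Import structures.
From mathcomp Require Import all_boot all_order all_algebra.
From mathcomp Require Import zify.
Import GRing.Theory.
Set Implicit Arguments. Unset Strict Implicit. Unset Printing Implicit Defensive.
Local Open Scope ring_scope.

(* An ideal J with J <= N_t but not J <= N_(t-1) contains some x with q(x) >= q_t, and
   since F_p x + A x <= J, both q_t <= dim J and q_t <= dim (A J) + 1.  Pick T <= A J of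
   dimension r = min(dim (A J), floor(dim J / 2)) and a complement B of T in J: the graphs
   V of the p^((dim J - r) r) linear maps B -> T all satisfy V <= J <= V + A J, hence
   V + A V = J by Nakayama's lemma for the nilpotent algebra A, and (dim J - r) r is at
   least floor(q_t^2 / 4).  As V <= N_k iff V + A V <= N_k (N_k is an ideal), the fibres
   of G over the ideals of the layer N_t minus N_(t-1) are disjoint sets of subspaces of
   that layer, which gives the counting inequality. *)

Lemma span_ind (K : fieldType) (vT : vectType K) (P : pred vT) (X : seq vT) :
  P 0 -> (forall k x y, P x -> P y -> P (k *: x + y)) ->
  {subset X <= P} -> {subset <<X>>%VS <= P}.
Proof.
move=> P0 PDZ PX w; rewrite -[X]in_tupleE => /coord_span ->.
apply: (big_ind P) => // [x y Px Py | i _]; first by rewrite -[x]scale1r PDZ.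
by rewrite -[_ *: _]addr0 PDZ //; apply: PX; rewrite mem_nth ?size_tuple.
Qed.

Lemma vbasis_nth_mem (K : fieldType) (vT : vectType K) (U : {vspace vT})
    (i : 'I_(\dim U)) :
  (vbasis U)`_i \in U.
Proof. by rewrite vbasis_mem // mem_nth ?size_tuple. Qed.

Lemma bigminn_le_cond (I : finType) (m : nat) (j : I) (P : pred I) (F : I -> nat) :
  P j -> (\big[minn/m]_(i | P i) F i <= F j)%N.
Proof.
by move=> Pj; have := Order.TotalTheory.bigmin_le_cond (T := nat) m F Pj; rewrite minEnat.
Qed.

Section Graph.
Variables (K : fieldType) (vT : vectType K) (B T : {vspace vT}).

(* graph_space M is the graph of the linear map B -> T whose matrix in the bases
   vbasis B and vbasis T is M. *)
Definition graph_shift (M : 'M[K]_(\dim B, \dim T)) (i : 'I_(\dim B)) : vT :=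
  \sum_(j < \dim T) M i j *: (vbasis T)`_j.

Definition graph_gens (M : 'M[K]_(\dim B, \dim T)) : (\dim B).-tuple vT :=
  [tuple (vbasis B)`_i + graph_shift M i | i < \dim B].

Definition graph_space (M : 'M[K]_(\dim B, \dim T)) : {vspace vT} :=
  <<graph_gens M>>%VS.

Lemma graph_shift_mem M i : graph_shift M i \in T.
Proof. by apply: rpred_sum => j _; rewrite memvZ ?vbasis_nth_mem. Qed.

Lemma graph_space_sub M : (graph_space M <= B + T)%VS.
Proof.
apply/span_subvP => _ /mapP[i _ ->].
by rewrite memv_add ?vbasis_nth_mem ?graph_shift_mem.
Qed.

Lemma graph_point_mem M (i : 'I_(\dim B)) :
  (vbasis B)`_i + graph_shift M i \in graph_space M.
Proof. by apply/memv_span/tnthP; exists i; rewrite tnth_mktuple. Qed.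

Lemma addv_graph_space M : (B + T <= graph_space M + T)%VS.
Proof.
rewrite subv_add addvSr andbT -{1}(span_basis (vbasisP B)).
apply/span_subvP => _ /tnthP[i ->]; rewrite (tnth_nth 0).
rewrite -(addrK (graph_shift M i) (vbasis B)`_i) memv_add ?memvN ?graph_shift_mem //.
exact: graph_point_mem.
Qed.

Hypothesis BT0 : (B :&: T = 0)%VS.

Lemma graph_space_capv M : (graph_space M :&: T = 0)%VS.
Proof.
apply/eqP; rewrite -subv0; apply/subvP => v; rewrite memv_cap memv0 => /andP[vG vinT].
have {vG} [c vE] : exists c : 'I_(\dim B) -> K,
    v = \sum_i c i *: (vbasis B)`_i + \sum_i c i *: graph_shift M i.
  exists (coord (graph_gens M) ^~ v); rewrite {1}(coord_span vG) -big_split.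
  by apply: eq_bigr => i _; rewrite nth_mktuple scalerDr.
have cB0 : \sum_i c i *: (vbasis B)`_i = 0.
  apply/eqP; rewrite -memv0 -BT0 memv_cap rpred_sum => [|i _]; last first.
    by rewrite memvZ ?vbasis_nth_mem.
  rewrite -(addrK (\sum_i c i *: graph_shift M i) (\sum_i c i *: (vbasis B)`_i)) -vE.
  by rewrite memvB // rpred_sum // => i _; rewrite memvZ ?graph_shift_mem.
move/freeP: (basis_free (vbasisP B)) => /(_ c cB0) c0.
by rewrite vE big1 ?add0r ?big1 // => i _; rewrite c0 scale0r.
Qed.

Lemma graph_space_inj : injective graph_space.
Proof.
move=> M N eqMN; apply/matrixP => k j.
have shiftE : graph_shift M k = graph_shift N k.
  apply/eqP; rewrite -subr_eq0 -memv0 -(graph_space_capv N) memv_cap.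
  rewrite [_ \in T]memvB ?graph_shift_mem // andbT.
  have -> : graph_shift M k - graph_shift N k =
      ((vbasis B)`_k + graph_shift M k) - ((vbasis B)`_k + graph_shift N k).
    by rewrite opprD addrACA subrr add0r.
  by rewrite memvB ?graph_point_mem // -eqMN graph_point_mem.
rewrite -(coord_sum_free (M k) j (basis_free (vbasisP T))).
by rewrite -(coord_sum_free (N k) j (basis_free (vbasisP T))) -!/(graph_shift _ k) shiftE.
Qed.
End Graph.

Lemma card_supplements_ge (K : finFieldType) n (J K0 : {vspace 'rV[K]_n}) r :
  (K0 <= J)%VS -> (r <= \dim K0)%N ->
  (#|K| ^ ((\dim J - r) * r) <=
     #|[set V : {vspace 'rV[K]_n} | (V <= J)%VS && (J <= V + K0)%VS]|)%N.
Proof.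
move=> K0J rK0; pose T := <<take r (vbasis K0)>>%VS.
have freeT : free (take r (vbasis K0)).
  apply: (@catl_free _ _ (drop r (vbasis K0))).
  by rewrite cat_take_drop (basis_free (vbasisP K0)).
have dimT : \dim T = r by rewrite (eqnP freeT) size_takel // size_tuple.
have TK0 : (T <= K0)%VS by apply/span_subvP => x /mem_take/vbasis_mem.
pose B := (J :\: T)%VS.
have BT_J : (B + T = J)%VS by rewrite addv_diff; apply/addv_idPl/(subv_trans TK0 K0J).
have dimB : \dim B = (\dim J - r)%N.
  by rewrite -BT_J (dimv_disjoint_sum (capv_diff _ _)) dimT addnK.
rewrite -dimB -dimT -card_mx -cardsT -(card_imset _ (graph_space_inj (capv_diff J T))).
apply/subset_leq_card/subsetP => _ /imsetP[M _ ->]; rewrite inE.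
have := graph_space_sub M; have := addv_graph_space M; rewrite BT_J => JGT -> /=.
exact: subv_trans JGT (addvS (subvv _) TK0).
Qed.

(* (d - r) r increases with r up to d/2, where it reaches floor(d^2/4). *)
Lemma sqr_div4_le_mul_minn (q d m : nat) :
  (q <= d)%N -> (q <= m.+1)%N -> (m <= d)%N ->
  (q ^ 2 %/ 4 <= (d - minn m d./2) * minn m d./2)%N.
Proof.
move=> qd qm md; have [k dE] : exists k, d = (k.*2 + odd d)%N.
  by exists d./2; rewrite addnC odd_double_half.
have q2d2 : (q ^ 2 %/ 4 <= d ^ 2 %/ 4)%N by rewrite leq_div2r // leq_exp2r.
case: (leqP d./2 m) => hm; last by move: hm; rewrite dE; case: (odd d) => /= hm; nia.
by apply: leq_trans q2d2 _; rewrite dE; case: (odd d) => /=; nia.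
Qed.

Lemma leq_mul_card_fibres (T U : finType) (g : T -> U) (S : {set T}) (D : {set U}) m :
  (forall u, u \in D -> m <= #|[set x in S | g x == u]|)%N -> (m * #|D| <= #|S|)%N.
Proof.
move=> fibre_ge; rewrite mulnC -sum_nat_const.
apply: (@leq_trans (\sum_(u in D) #|[set x in S | g x == u]|)); first exact: leq_sum.
rewrite (eq_bigr (fun u => \sum_(x in S | g x == u) 1)%N) => [|u _]; last first.
  by rewrite sum1_card; apply: eq_card => x; rewrite inE.
rewrite -sum1_card (partition_big g predT) //= [X in (_ <= X)%N](bigID (mem D)) /=.
exact: leq_addr.
Qed.

Section NilpotentAlgebra.
Variables (p n : nat) (mul : 'rV['F_p]_n -> 'rV['F_p]_n -> 'rV['F_p]_n).
Local Notation A := 'rV['F_p]_n.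
Hypotheses (mulDl : mul_linear_l mul) (mulC : commutative mul) (mulA : associative mul).

Lemma mulDr k (a b c : A) : mul a (k *: b + c) = k *: mul a b + mul a c.
Proof. by rewrite mulC mulDl !(mulC a). Qed.

Lemma mul0x (a : A) : mul 0 a = 0.
Proof.
have := mulDl 1 0 0 a; rewrite !scale1r addr0 => /eqP.
by rewrite -subr_eq subrr eq_sym => /eqP.
Qed.

Lemma mulx0 (a : A) : mul a 0 = 0.
Proof. by rewrite mulC mul0x. Qed.

Lemma mem_mulAV (V : {vspace A}) a v : v \in V -> mul a v \in mulAV mul V.
Proof. by move=> Vv; apply/memv_span/allpairsP; exists (a, v); rewrite !mem_enum !inE. Qed.

Lemma mulAV_subvP (V W : {vspace A}) :
  reflect (forall a v, v \in V -> mul a v \in W) (mulAV mul V <= W)%VS.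
Proof.
apply: (iffP idP) => [/subvP VW a v Vv | VW]; first exact/VW/mem_mulAV.
by apply/span_subvP => _ /allpairsP[[a v] [_ /= + ->]]; rewrite mem_enum inE; apply: VW.
Qed.

Lemma mul_span_subv a (X : seq A) (W : {vspace A}) :
  {subset X <= [pred x | mul a x \in W]} -> {subset <<X>>%VS <= [pred x | mul a x \in W]}.
Proof.
apply: span_ind => [|k x y]; rewrite !inE ?mulx0 ?mem0v // mulDr.
by move=> Wx Wy; rewrite memvD ?memvZ.
Qed.

Lemma mulAVS (V W : {vspace A}) : (V <= W)%VS -> (mulAV mul V <= mulAV mul W)%VS.
Proof. by move=> /subvP VW; apply/mulAV_subvP => a v /VW; apply: mem_mulAV. Qed.

Lemma mulAVD (V W : {vspace A}) :
  (mulAV mul (V + W) <= mulAV mul V + mulAV mul W)%VS.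
Proof.
apply/mulAV_subvP => a _ /memv_addP[v Vv [w Ww ->]].
by rewrite -[v]scale1r mulDr scale1r memv_add ?mem_mulAV.
Qed.

Lemma mulAV_idem (V : {vspace A}) : (mulAV mul (mulAV mul V) <= mulAV mul V)%VS.
Proof.
apply/mulAV_subvP => a; apply: mul_span_subv => _ /allpairsP[[b v] [_ /= + ->]].
by rewrite mem_enum !inE mulA => Vv; apply: mem_mulAV.
Qed.

Lemma is_ideal_Gmap V : is_ideal mul (Gmap mul V).
Proof.
apply: subv_trans (mulAVD _ _) _; rewrite subv_add addvSr /=.
exact: subv_trans (mulAV_idem V) (addvSr _ _).
Qed.

Lemma iter_mulAVS k (V W : {vspace A}) :
  (V <= W)%VS -> (iter k (mulAV mul) V <= iter k (mulAV mul) W)%VS.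
Proof. by move=> VW; elim: k => //= k; apply: mulAVS. Qed.

Lemma iter_mulAV_fullv k : (iter k (mulAV mul) fullv <= Apow mul k.+1)%VS.
Proof.
elim: k => [|k IHk] /=.
  apply/subvP => x _; apply/memv_span/allpairsP.
  by exists (x, [tuple]); rewrite !mem_enum !inE.
apply: subv_trans (mulAVS IHk) _; apply/mulAV_subvP => a.
apply: mul_span_subv => _ /allpairsP[[b xs] [_ _ ->]]; rewrite inE.
by apply/memv_span/allpairsP; exists (b, [tuple of a :: xs]); rewrite !mem_enum !inE.
Qed.

(* Nakayama: J <= G(V) + A^k J for every k, and A^(e+1) = 0. *)
Lemma Gmap_eq_ideal e (V J : {vspace A}) :
  Apow mul e.+1 = 0%VS -> is_ideal mul J ->
  (V <= J)%VS -> (J <= V + mulAV mul J)%VS -> Gmap mul V = J.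
Proof.
move=> Ae1 idJ VJ JV; apply/eqP; rewrite eqEsubv subv_add VJ (subv_trans (mulAVS VJ)) //=.
have J_G_iter k : (J <= Gmap mul V + iter k (mulAV mul) J)%VS.
  elim: k => [|k IHk] /=; first exact: addvSr.
  apply: subv_trans JV _; apply: subv_trans (addvS (subvv V) (mulAVS IHk)) _.
  apply: subv_trans (addvS (subvv V) (mulAVD _ _)) _.
  rewrite addvA; apply: addvS => //.
  by rewrite subv_add addvSl; apply: is_ideal_Gmap.
have := J_G_iter e; rewrite (_ : iter e _ J = 0%VS) ?addv0 //.
by apply/eqP; rewrite -subv0 -Ae1 (subv_trans (iter_mulAVS e (subvf J))) ?iter_mulAV_fullv.
Qed.

Lemma foldr_mulDr (xs : seq A) k a b :
  foldr mul (k *: a + b) xs = k *: foldr mul a xs + foldr mul b xs.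
Proof. by elim: xs => //= x xs ->; rewrite mulDr. Qed.

Lemma foldr_mul0 (xs : seq A) : foldr mul 0 xs = 0.
Proof. by elim: xs => //= x xs ->; rewrite mulx0. Qed.

Lemma foldr_mulA (xs : seq A) a v : foldr mul (mul a v) xs = mul a (foldr mul v xs).
Proof. by elim: xs => //= x xs ->; rewrite mulA (mulC x) -mulA. Qed.

Definition Nspace k : {vspace A} := <<enum (Nset mul k)>>%VS.

Lemma mem_Nspace k x : (x \in Nspace k) = (x \in Nset mul k).
Proof.
apply/idP/idP => [|Nx]; last by rewrite memv_span ?mem_enum.
apply: (span_ind (P := [pred y | y \in Nset mul k])) => [|c a b|y];
  rewrite ?mem_enum // !inE.
  by apply/forallP => xs; rewrite foldr_mul0.
move=> /forallP Na /forallP Nb; apply/forallP => xs.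
by rewrite foldr_mulDr (eqP (Na xs)) (eqP (Nb xs)) scaler0 addr0.
Qed.

Lemma subset_Nset_subv k (V : {vspace A}) :
  (V \subset Nset mul k) = (V <= Nspace k)%VS.
Proof.
apply/subsetP/subvP => VN x /VN; first by rewrite mem_Nspace.
by rewrite -mem_Nspace.
Qed.

Lemma is_ideal_Nspace k : is_ideal mul (Nspace k).
Proof.
apply/mulAV_subvP => a v; rewrite !mem_Nspace !inE => /forallP Nv.
by apply/forallP => xs; rewrite foldr_mulA (eqP (Nv xs)) mulx0.
Qed.

Lemma Nset_subS k : Nset mul k \subset Nset mul k.+1.
Proof.
apply/subsetP => x; rewrite !inE => /forallP Nx.
apply/forallP => -[[|y ys] //= /eqP[ysk]].
by have := Nx (Tuple (introT eqP ysk)); rewrite /= => /eqP->; rewrite mulx0.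
Qed.

Lemma Gmap_subset_Nset k (V : {vspace A}) :
  (Gmap mul V \subset Nset mul k) = (V \subset Nset mul k).
Proof.
rewrite !subset_Nset_subv subv_add; apply/andP/idP => [[] // | VN].
by split=> //; apply: subv_trans (mulAVS VN) (is_ideal_Nspace k).
Qed.

Lemma mulA_vline_subv (J : {vspace A}) x :
  x \in J -> (<<[seq mul a x | a <- enum [set: A]]>> <= mulAV mul J)%VS.
Proof. by move=> Jx; apply/span_subvP => _ /mapP[a _ ->]; apply: mem_mulAV. Qed.

Lemma qdim_le_dim (J : {vspace A}) x :
  is_ideal mul J -> x \in J -> (qdim mul x <= \dim J)%N.
Proof.
move=> idJ Jx; apply: dimvS; rewrite subv_add -memvE Jx /=.
exact: subv_trans (mulA_vline_subv Jx) idJ.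
Qed.

Lemma qdim_le_mulAV (J : {vspace A}) x :
  x \in J -> (qdim mul x <= (\dim (mulAV mul J)).+1)%N.
Proof.
move=> Jx; rewrite /qdim; set S := <<_>>%VS.
apply: leq_trans (leq_addr (\dim (<[x]> :&: S)) _) _.
rewrite dimv_sum_cap dim_vline.
exact: leq_add (leq_b1 _) (dimvS (mulA_vline_subv Jx)).
Qed.

Lemma card_Gmap_preimage_ge e t (J : {vspace A}) :
  prime p -> Apow mul e.+1 = 0%VS -> is_ideal mul J ->
  J \subset Nset mul t -> ~~ (J \subset Nset mul t.-1) ->
  (p ^ (qmin mul t ^ 2 %/ 4) <= #|[set V : {vspace A} | Gmap mul V == J]|)%N.
Proof.
move=> p_pr Ae1 idJ JNt /subsetPn[x Jx xNt'].
have qx : (qmin mul t <= qdim mul x)%N.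
  by apply: bigminn_le_cond; rewrite inE xNt' (subsetP JNt).
have r_le := geq_minl (\dim (mulAV mul J)) (\dim J)./2.
apply: leq_trans (leq_trans _ (card_supplements_ge idJ r_le)) _.
  rewrite card_Fp // leq_pexp2l ?prime_gt0 //.
  have := sqr_div4_le_mul_minn (qdim_le_dim idJ Jx) (qdim_le_mulAV Jx) (dimvS idJ).
  apply: leq_trans.
  by rewrite leq_div2r // leq_exp2r.
apply/subset_leq_card/subsetP => V; rewrite !inE => /andP[VJ JV].
by rewrite (Gmap_eq_ideal Ae1 idJ VJ JV).
Qed.

End NilpotentAlgebra.

Theorem proposition2p4 (p n : nat) (mul : 'rV['F_p]_n -> 'rV['F_p]_n -> 'rV['F_p]_n)
    (e : nat) :
  prime p ->
  mul_linear_l mul -> commutative mul -> associative mul ->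
  (0 < e)%N -> Apow mul e != 0%VS -> Apow mul e.+1 = 0%VS ->
  forall t : nat, (1 <= t <= e)%N ->
    (forall J : {vspace 'rV['F_p]_n},
        is_ideal mul J -> J \subset Nset mul t -> ~~ (J \subset Nset mul t.-1) ->
        (p ^ ((qmin mul t) ^ 2 %/ 4) <= #|[set V : {vspace 'rV['F_p]_n} | Gmap mul V == J]|)%N)
    /\
    (p ^ ((qmin mul t) ^ 2 %/ 4) * (i_of mul (Nset mul t) - i_of mul (Nset mul t.-1))
       <= s_of (Nset mul t) - s_of (Nset mul t.-1))%N.
Proof.
move=> p_pr mulDl mulC mulA _ _ Ae1 t /andP[t_gt0 _].
have preimage_ge J := card_Gmap_preimage_ge mulDl mulC mulA (t := t) (J := J) p_pr Ae1.
split=> //.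
have Nt'Nt : Nset mul t.-1 \subset Nset mul t by rewrite -{2}(prednK t_gt0) Nset_subS.
rewrite /s_of /i_of -!cardsDS; first last.
- by apply/subsetP => U; rewrite !inE => /andP[-> /subset_trans->].
- by apply/subsetP => U; rewrite !inE => /subset_trans->.
apply: (leq_mul_card_fibres (g := Gmap mul)) => J; rewrite !inE negb_and.
case/and3P=> + idJ JNt; rewrite idJ /= => JNt'.
apply: leq_trans (preimage_ge J idJ JNt JNt') _.
apply/subset_leq_card/subsetP => V; rewrite !inE => /eqP GVJ.
by rewrite -!(Gmap_subset_Nset mulDl mulC mulA _ V) GVJ JNt' JNt eqxx.
Qed.
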